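(* Let $\bm{U}_{RU},\bm{U}_{LU},\bm{U}_{LD},\bm{U}_{RD}\in\mathcal{G}$ and define the wave speeds $S_L=2\min_{\bm{W}}\lambda_1^{(1)}(\bm{W})$, $S_R=2\max_{\bm{W}}\lambda_1^{(4)}(\bm{W})$, $S_D=2\min_{\bm{W}}\lambda_2^{(1)}(\bm{W})$, $S_U=2\max_{\bm{W}}\lambda_2^{(4)}(\bm{W})$, where $\bm{W}$ ranges over $\{\bm{U}_{LD},\bm{U}_{RD},\bm{U}_{LU},\bm{U}_{RU}\}$. Assume $S_L<0<S_R$ and $S_D<0<S_U$. Let $$\bm{U}^{\ast}=\frac{S_RS_U\bm{U}_{RU}+S_LS_D\bm{U}_{LD}-S_RS_D\bm{U}_{RD}-S_LS_U\bm{U}_{LU}}{(S_R-S_L)(S_U-S_D)}-\frac{S_U(\bm{F}_{RU}-\bm{F}_{LU})-S_D(\bm{F}_{RD}-\bm{F}_{LD})}{(S_R-S_L)(S_U-S_D)}-\frac{S_R(\bm{G}_{RU}-\bm{G}_{RD})-S_L(\bm{G}_{LU}-\bm{G}_{LD})}{(S_R-S_L)(S_U-S_D)},$$ where $\bm{F}_{K}=\bm{F}_1(\bm{U}_K)$ and $\bm{G}_K=\bm{F}_2(\bm{U}_K)$ for $K\in\{LD,RD,LU,RU\}$. Then $\bm{U}^\ast=(D^\ast,\bm{m}^\ast,E^\ast)^T\in\mathcal{G}$, i.e. $D^\ast>0$, $E^\ast>0$ and $(E^\ast)^2-(D^\ast)^2-|\bm{m}^\ast|^2>0$.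
   Context: Two-dimensional special relativistic hydrodynamics in units with $c=1$. Primitive variables: rest-mass density $\rho$, velocity $\bm{u}=(u_1,u_2)$, pressure $p$; equation of state $p=(\Gamma-1)\rho e$ with fixed $\Gamma\in(1,2]$; $h=1+e+p/\rho$; $\gamma=(1-|\bm{u}|^2)^{-1/2}$. Conservative variables $\bm{U}=(D,\bm{m},E)^T$ with $D=\rho\gamma$, $\bm{m}=\rho h\gamma^2\bm{u}$, $E=\rho h\gamma^2-p$. Fluxes $\bm{F}_\ell(\bm{U})=(Du_\ell,\ \bm{m}u_\ell+p\bm{e}_\ell,\ (E+p)u_\ell)^T$, $\ell=1,2$ ($\bm{e}_\ell$ the $\ell$-th unit vector of $\mathbb{R}^2$). Admissible set $\mathcal{G}=\{\bm{U}: D>0,\ E-\sqrt{D^2+|\bm{m}|^2}>0\}$ (equivalently $\rho>0,p>0,|\bm{u}|<1$; on $\mathcal{G}$ primitive variables and fluxes are well defined). With $c_s=\sqrt{\Gamma p/(\rho h)}$, $\lambda_\ell^{(1)}(\bm{U})$ and $\lambda_\ell^{(4)}(\bm{U})$ denote $\dfrac{u_\ell(1-c_s^2)\mp c_s\gamma^{-1}\sqrt{1-u_\ell^2-c_s^2(|\bm{u}|^2-u_\ell^2)}}{1-c_s^2|\bm{u}|^2}$ (minus sign for $(1)$, plus sign for $(4)$), the smallest and largest eigenvalues of $\partial\bm{F}_\ell/\partial\bm{U}$. The four states are the initial data of a 2D Riemann problem in the four quadrants (RU: first, LU: second, LD: third, RD: fourth), and $\bm{U}^\ast$ is the intermediate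 state of the multidimensional HLL Riemann solver. *)

From Stdlib Require Import Reals Lra.
Open Scope R_scope.

Record prim := mkPrim { rho : R; u1 : R; u2 : R; pr : R }.

Definition prim_adm (W : prim) : Prop :=
  0 < rho W /\ 0 < pr W /\ u1 W ^ 2 + u2 W ^ 2 < 1.

Definition usq (W : prim) : R := u1 W ^ 2 + u2 W ^ 2.
Definition lorentz (W : prim) : R := / sqrt (1 - usq W).
(* specific internal energy from EOS p = (Gamma-1) rho e *)
Definition eint (Gam : R) (W : prim) : R := pr W / ((Gam - 1) * rho W).
Definition enth (Gam : R) (W : prim) : R := 1 + eint Gam W + pr W / rho W.

(* velocity component l (l = 1 or 2; any other index is treated as 2) *)
Definition uc (l : nat) (W : prim) : R := if Nat.eqb l 1 then u1 W else u2 W.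

(* Conservative variables U = (D, m1, m2, E), components indexed 0..3 *)
Definition cons (Gam : R) (W : prim) (k : nat) : R :=
  let g := lorentz W in
  let rh := rho W * enth Gam W * g ^ 2 in
  match k with
  | 0%nat => rho W * g
  | 1%nat => rh * u1 W
  | 2%nat => rh * u2 W
  | _ => rh - pr W
  end.

Definition flux (Gam : R) (l : nat) (W : prim) (k : nat) : R :=
  match k with
  | 0%nat => cons Gam W 0 * uc l W
  | 1%nat => cons Gam W 1 * uc l W + (if Nat.eqb l 1 then pr W else 0)
  | 2%nat => cons Gam W 2 * uc l W + (if Nat.eqb l 2 then pr W else 0)
  | _ => (cons Gam W 3 + pr W) * uc l W
  end.

Definition csnd (Gam : R) (W : prim) : R :=
  sqrt (Gam * pr W / (rho W * enth Gam W)).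

(* extreme eigenvalues lambda_l^(1) (sgn = -1) and lambda_l^(4) (sgn = +1) *)
Definition lam_gen (sgn : R) (Gam : R) (l : nat) (W : prim) : R :=
  let c := csnd Gam W in
  let ul := uc l W in
  (ul * (1 - c ^ 2)
   + sgn * c * / lorentz W * sqrt (1 - ul ^ 2 - c ^ 2 * (usq W - ul ^ 2)))
  / (1 - c ^ 2 * usq W).
Definition lam1 (Gam : R) (l : nat) (W : prim) : R := lam_gen (-1) Gam l W.
Definition lam4 (Gam : R) (l : nat) (W : prim) : R := lam_gen 1 Gam l W.

Definition min4 (a b c d : R) : R := Rmin (Rmin a b) (Rmin c d).
Definition max4 (a b c d : R) : R := Rmax (Rmax a b) (Rmax c d).

Definition S_L Gam (WRU WLU WLD WRD : prim) : R :=
  2 * min4 (lam1 Gam 1 WLD) (lam1 Gam 1 WRD) (lam1 Gam 1 WLU) (lam1 Gam 1 WRU).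
Definition S_R Gam (WRU WLU WLD WRD : prim) : R :=
  2 * max4 (lam4 Gam 1 WLD) (lam4 Gam 1 WRD) (lam4 Gam 1 WLU) (lam4 Gam 1 WRU).
Definition S_D Gam (WRU WLU WLD WRD : prim) : R :=
  2 * min4 (lam1 Gam 2 WLD) (lam1 Gam 2 WRD) (lam1 Gam 2 WLU) (lam1 Gam 2 WRU).
Definition S_U Gam (WRU WLU WLD WRD : prim) : R :=
  2 * max4 (lam4 Gam 2 WLD) (lam4 Gam 2 WRD) (lam4 Gam 2 WLU) (lam4 Gam 2 WRU).

Definition Ustar Gam (WRU WLU WLD WRD : prim) (k : nat) : R :=
  let sL := S_L Gam WRU WLU WLD WRD in
  let sR := S_R Gam WRU WLU WLD WRD in
  let sD := S_D Gam WRU WLU WLD WRD in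
  let sU := S_U Gam WRU WLU WLD WRD in
  let den := (sR - sL) * (sU - sD) in
  let U := fun W => cons Gam W k in
  let F := fun W => flux Gam 1 W k in
  let G := fun W => flux Gam 2 W k in
  (sR * sU * U WRU + sL * sD * U WLD - sR * sD * U WRD - sL * sU * U WLU) / den
  - (sU * (F WRU - F WLU) - sD * (F WRD - F WLD)) / den
  - (sR * (G WRU - G WRD) - sL * (G WLU - G WLD)) / den.

(* U* is a positive combination of eight one-dimensional vectors +-(s U_K - F_l(U_K)), where s
   is half of one of the wave speeds: the corner RU, for instance, contributes
   S_R S_U U - S_U F_1(U) - S_R F_2(U) = S_U (S_R/2 U - F_1(U)) + S_R (S_U/2 U - F_2(U)).
   Since the admissible set is a convex cone, it is enough that s U - F_l(U) is admissible for
   s >= lambda_l^(4)(U), and F_l(U) - s U for s <= lambda_l^(1)(U) (the mirror image u_l -> -u_l).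
   Writing (D', m', E') = s U - F_l(U), one has E'^2 - D'^2 - |m'|^2 = gamma^2 Q(s) with
   Q(s) = A (s - u_l)^2 - p^2 gamma^-2 (1 - s^2) and A = (rho h)^2 - rho^2 - 2 rho h p.  The convex
   quadratic Q is negative at u_l and positive at lambda^(4), because lambda^(4) solves
   (1 - c_s^2)(lambda - u_l)^2 = c_s^2 (1 - lambda^2) gamma^-2 while the ideal-gas law with
   Gamma <= 2 gives A c_s^2 > p^2 (1 - c_s^2). *)

From Stdlib Require Import Reals Lra.
Open Scope R_scope.

Definition admissible (U : nat -> R) : Prop :=
  0 < U 0%nat /\ 0 < U 3%nat /\
  U 3%nat ^ 2 - U 0%nat ^ 2 - (U 1%nat ^ 2 + U 2%nat ^ 2) > 0.

Lemma admissible_ext U V : (forall k, U k = V k) -> admissible U -> admissible V.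
Proof. intros E; unfold admissible; rewrite !E; auto. Qed.

Lemma admissible_scale a U : 0 < a -> admissible U -> admissible (fun k => a * U k).
Proof.
  unfold admissible; intros Ha (HD & HE & HQ); split; [|split]; [nra | nra |].
  replace ((a * U 3%nat) ^ 2 - (a * U 0%nat) ^ 2 - ((a * U 1%nat) ^ 2 + (a * U 2%nat) ^ 2))
    with (a ^ 2 * (U 3%nat ^ 2 - U 0%nat ^ 2 - (U 1%nat ^ 2 + U 2%nat ^ 2))) by ring.
  apply Rmult_lt_0_compat; nra.
Qed.

Lemma admissible_add U V : admissible U -> admissible V -> admissible (fun k => U k + V k).
Proof.
  unfold admissible; cbv beta; intros (HD & HE & HQ) (HD' & HE' & HQ').
  set (D := U 0%nat) in *; set (m1 := U 1%nat) in *; set (m2 := U 2%nat) in *.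
  set (E := U 3%nat) in *.
  set (D' := V 0%nat) in *; set (n1 := V 1%nat) in *; set (n2 := V 2%nat) in *.
  set (E' := V 3%nat) in *.
  assert (Hdot : D * D' + m1 * n1 + m2 * n2 < E * E').
  { pose proof (pow2_ge_0 (E' * D - E * D')).
    pose proof (pow2_ge_0 (E' * m1 - E * n1)).
    pose proof (pow2_ge_0 (E' * m2 - E * n2)).
    assert (0 < E * E') by nra. nra. }
  split; [lra | split; [lra | nra]].
Qed.

Lemma convex_quadratic_pos (a b c u L s : R) :
  0 <= a -> a * u ^ 2 + b * u + c < 0 -> 0 < a * L ^ 2 + b * L + c -> u < L <= s ->
  0 < a * s ^ 2 + b * s + c.
Proof.
  intros Ha Hu HL [HuL HLs].
  assert (Hinterp : (L - u) * (a * s ^ 2 + b * s + c) =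
    (s - u) * (a * L ^ 2 + b * L + c) - (s - L) * (a * u ^ 2 + b * u + c)
    + a * (s - L) * (L - u) * (s - u)) by ring.
  assert (0 <= a * (s - L) * (L - u) * (s - u)) by (repeat apply Rmult_le_pos; lra).
  nra.
Qed.

Lemma char_speed_root (sg c u b : R) :
  (sg = 1 \/ sg = -1) -> 0 < c < 1 -> u ^ 2 <= b < 1 ->
  let L := (u * (1 - c ^ 2) + sg * c * sqrt (1 - b) * sqrt (1 - u ^ 2 - c ^ 2 * (b - u ^ 2)))
           / (1 - c ^ 2 * b) in
  0 < sg * (L - u) /\ (1 - c ^ 2) * (L - u) ^ 2 = c ^ 2 * (1 - L ^ 2) * (1 - b).
Proof.
  intros Hsg Hc Hb L.
  assert (Hd : 0 < 1 - c ^ 2 * b) by nra.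
  assert (Harg : 0 < 1 - u ^ 2 - c ^ 2 * (b - u ^ 2)) by nra.
  set (q := sqrt (1 - b)) in L.
  set (R := sqrt (1 - u ^ 2 - c ^ 2 * (b - u ^ 2))) in L.
  assert (Hq : 0 < q) by (apply sqrt_lt_R0; lra).
  assert (Hq2 : q ^ 2 = 1 - b) by (apply pow2_sqrt; lra).
  assert (HR : 0 < R) by (apply sqrt_lt_R0; lra).
  assert (HR2 : R ^ 2 = 1 - u ^ 2 - c ^ 2 * (b - u ^ 2)) by (apply pow2_sqrt; lra).
  clearbody q R.
  assert (Hbq : b = 1 - q ^ 2) by lra. subst b.
  assert (Hdrift : sg * u * c * q < R).
  { assert (R ^ 2 - (u * c * q) ^ 2 = (1 - u ^ 2) * (1 - c ^ 2 * (1 - q ^ 2)))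
      by (rewrite HR2; ring).
    assert (0 < (1 - u ^ 2) * (1 - c ^ 2 * (1 - q ^ 2))) by (apply Rmult_lt_0_compat; nra).
    destruct Hsg as [-> | ->]; nra. }
  split.
  - assert (HLu : sg * (L - u) = c * q * (R - sg * u * c * q) / (1 - c ^ 2 * (1 - q ^ 2))).
    { unfold L. destruct Hsg as [-> | ->]; field; lra. }
    rewrite HLu. apply Rdiv_lt_0_compat; [|lra].
    apply Rmult_lt_0_compat; [nra | lra].
  - assert (Hroot : (1 - c ^ 2) * (L - u) ^ 2 - c ^ 2 * (1 - L ^ 2) * (1 - (1 - q ^ 2)) =
      c ^ 2 * q ^ 2 * (R ^ 2 - (1 - u ^ 2 - c ^ 2 * (1 - q ^ 2 - u ^ 2)))
      / (1 - c ^ 2 * (1 - q ^ 2))).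
    { unfold L. destruct Hsg as [-> | ->]; field; lra. }
    rewrite HR2, Rminus_diag, Rmult_0_r, Rdiv_0_l in Hroot. lra.
Qed.

Lemma char_quadratic_pos (A p k c2 u L s : R) :
  0 < p -> 0 < k -> u ^ 2 < 1 -> 0 < c2 < 1 -> p ^ 2 * (1 - c2) < A * c2 ->
  u < L -> (1 - c2) * (L - u) ^ 2 = c2 * (1 - L ^ 2) * k -> L <= s ->
  0 < A * (s - u) ^ 2 - p ^ 2 * k * (1 - s ^ 2).
Proof.
  intros Hp Hk Hu1 Hc2 Hsound HuL Hroot HLs.
  assert (HL1 : 0 < 1 - L ^ 2).
  { assert (0 < (1 - c2) * (L - u) ^ 2) by (apply Rmult_lt_0_compat; nra).
    assert (0 < c2 * k) by nra.
    assert (0 < c2 * k * (1 - L ^ 2)).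
    { replace (c2 * k * (1 - L ^ 2)) with ((1 - c2) * (L - u) ^ 2) by (rewrite Hroot; ring).
      lra. }
    nra. }
  assert (HA : 0 < A) by nra.
  replace (A * (s - u) ^ 2 - p ^ 2 * k * (1 - s ^ 2))
    with ((A + p ^ 2 * k) * s ^ 2 + (- 2 * A * u) * s + (A * u ^ 2 - p ^ 2 * k)) by ring.
  apply (convex_quadratic_pos _ _ _ u L s); [nra | | | lra].
  - assert (0 < p ^ 2 * k * (1 - u ^ 2)) by (repeat apply Rmult_lt_0_compat; nra). nra.
  - assert (HQL : (1 - c2) * ((A + p ^ 2 * k) * L ^ 2 + (- 2 * A * u) * L
                              + (A * u ^ 2 - p ^ 2 * k))
                  = k * (1 - L ^ 2) * (A * c2 - p ^ 2 * (1 - c2))).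
    { transitivity (A * ((1 - c2) * (L - u) ^ 2) - (1 - c2) * p ^ 2 * k * (1 - L ^ 2)); [ring|].
      rewrite Hroot. ring. }
    assert (0 < k * (1 - L ^ 2) * (A * c2 - p ^ 2 * (1 - c2)))
      by (repeat apply Rmult_lt_0_compat; lra).
    nra.
Qed.

Lemma wave_energy_pos (H p w k u s : R) :
  0 < p -> 0 < k <= 1 - u ^ 2 -> H * k = w -> 2 * p < w -> u < s ->
  (H * u * (s - u) - p) ^ 2 < (H * (s - u) - p * s) ^ 2 ->
  0 < H * (s - u) - p * s.
Proof.
  intros Hp Hk HHk Hw Hus Hsq.
  assert (Hu : -1 < u < 1) by nra.
  assert (HH : 0 < H - p).
  { assert (0 < (H - p) * k) by nra. nra. }
  (* For s <= 1 the energy exceeds the normal momentum; beyond, it grows with slope H - p. *)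
  destruct (Rle_or_lt s 1) as [Hs1 | Hs1].
  - set (E := H * (s - u) - p * s) in *. set (m := H * u * (s - u) - p) in *.
    assert (HEm : 0 < E - m).
    { assert (0 < H * (s - u) * (1 - u)) by (repeat apply Rmult_lt_0_compat; lra).
      unfold E, m. nra. }
    assert (0 < (E - m) * (E + m)) by nra.
    assert (0 < E + m).
    { apply (Rmult_lt_reg_l (E - m)); [lra|]. rewrite Rmult_0_r. lra. }
    lra.
  - assert (0 < H * (1 - u) - p).
    { assert (0 < (1 - u) * (w - p * (1 + u))) by (apply Rmult_lt_0_compat; nra).
      assert (p * k <= p * (1 - u ^ 2)) by (apply Rmult_le_compat_l; lra).
      assert (0 < (H * (1 - u) - p) * k).
      { replace ((H * (1 - u) - p) * k) with (H * k * (1 - u) - p * k) by ring.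
        rewrite HHk. nra. }
      nra. }
    nra.
Qed.

(* The coordinates are those of s U - F_l(U) for a state with density r, pressure p, enthalpy
   density w = rho h, Lorentz factor g and velocity components u (normal) and v (transverse). *)
Lemma wave_coordinates_admissible (r p w g u v c2 L s : R) :
  0 < r -> 0 < p -> 0 < g -> g ^ 2 * (1 - u ^ 2 - v ^ 2) = 1 -> 2 * p < w ->
  0 < c2 < 1 -> p ^ 2 * (1 - c2) < (w ^ 2 - r ^ 2 - 2 * w * p) * c2 ->
  u < L -> (1 - c2) * (L - u) ^ 2 = c2 * (1 - L ^ 2) * (1 - u ^ 2 - v ^ 2) -> L <= s ->
  let H := w * g ^ 2 in
  0 < r * g * (s - u) /\ 0 < H * (s - u) - p * s /\
  (H * (s - u) - p * s) ^ 2 - (r * g * (s - u)) ^ 2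
    - ((H * u * (s - u) - p) ^ 2 + (H * v * (s - u)) ^ 2) > 0.
Proof.
  intros Hr Hp Hg Hgk Hw Hc2 Hsound HuL Hroot HLs H.
  set (k := 1 - u ^ 2 - v ^ 2) in *.
  set (A := w ^ 2 - r ^ 2 - 2 * w * p) in *.
  assert (Hk : 0 < k) by nra.
  assert (Hk1 : k <= 1 - u ^ 2) by (unfold k; nra).
  assert (HQ : 0 < A * (s - u) ^ 2 - p ^ 2 * k * (1 - s ^ 2))
    by (apply (char_quadratic_pos A p k c2 u L s); nra).
  assert (Hnorm : (H * (s - u) - p * s) ^ 2 - (r * g * (s - u)) ^ 2
                  - ((H * u * (s - u) - p) ^ 2 + (H * v * (s - u)) ^ 2)
                  = g ^ 2 * (A * (s - u) ^ 2 - p ^ 2 * k * (1 - s ^ 2))).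
  { transitivity (g ^ 2 * (A * (s - u) ^ 2 - p ^ 2 * k * (1 - s ^ 2))
                  + (g ^ 2 * k - 1) * ((s - u) ^ 2 * w ^ 2 * g ^ 2 + p ^ 2 * (1 - s ^ 2))).
    - unfold H, A, k. ring.
    - rewrite Hgk. ring. }
  assert (HN : (H * (s - u) - p * s) ^ 2 - (r * g * (s - u)) ^ 2
               - ((H * u * (s - u) - p) ^ 2 + (H * v * (s - u)) ^ 2) > 0).
  { rewrite Hnorm. apply Rmult_lt_0_compat; nra. }
  split; [repeat apply Rmult_lt_0_compat; lra | split; [| exact HN]].
  apply (wave_energy_pos H p w k); [lra | lra | | lra | lra |].
  - unfold H. transitivity (w * (g ^ 2 * k)); [ring | rewrite Hgk; ring].
  - pose proof (pow2_ge_0 (r * g * (s - u))). pose proof (pow2_ge_0 (H * v * (s - u))). lra.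
Qed.

Definition utr (l : nat) (W : prim) : R := if Nat.eqb l 1 then u2 W else u1 W.

Lemma usq_split l W : usq W = uc l W ^ 2 + utr l W ^ 2.
Proof. unfold usq, uc, utr. destruct (Nat.eqb l 1); ring. Qed.

Section IdealGas.

Variables (Gam : R) (W : prim).
Hypotheses (HGam : 1 < Gam <= 2) (HW : prim_adm W).

Lemma internal_energy_density_pos : 0 < rho W * eint Gam W.
Proof.
  destruct HW as (Hr & Hp & _). unfold eint.
  apply Rmult_lt_0_compat; [lra | apply Rdiv_lt_0_compat; nra].
Qed.

Lemma pr_eos : pr W = (Gam - 1) * (rho W * eint Gam W).
Proof. destruct HW as (Hr & _). unfold eint. field. split; lra. Qed.

Lemma enthalpy_density : rho W * enth Gam W = rho W + Gam * (rho W * eint Gam W).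
Proof. destruct HW as (Hr & _). unfold enth. rewrite pr_eos. field. lra. Qed.

Lemma two_pr_lt_enthalpy_density : 2 * pr W < rho W * enth Gam W.
Proof.
  destruct HW as (Hr & _). pose proof internal_energy_density_pos.
  rewrite enthalpy_density, pr_eos. nra.
Qed.

Lemma csnd_sq : csnd Gam W ^ 2 = Gam * pr W / (rho W * enth Gam W).
Proof.
  pose proof two_pr_lt_enthalpy_density. destruct HW as (_ & Hp & _).
  unfold csnd. apply pow2_sqrt, Rlt_le, Rdiv_lt_0_compat; nra.
Qed.

Lemma csnd_bounds : 0 < csnd Gam W < 1.
Proof.
  pose proof two_pr_lt_enthalpy_density. destruct HW as (Hr & Hp & _).
  assert (Hc : 0 < csnd Gam W) by (apply sqrt_lt_R0, Rdiv_lt_0_compat; nra).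
  split; [exact Hc|].
  assert (csnd Gam W ^ 2 < 1).
  { assert (Hc2 : csnd Gam W ^ 2 * (rho W * enth Gam W) = Gam * pr W).
    { rewrite csnd_sq. set (w := rho W * enth Gam W) in *. field. lra. }
    assert (Gam * pr W < rho W * enth Gam W).
    { pose proof internal_energy_density_pos.
      rewrite enthalpy_density, pr_eos.
      assert (0 <= Gam * (2 - Gam) * (rho W * eint Gam W)) by (apply Rmult_le_pos; nra).
      nra. }
    nra. }
  nra.
Qed.

Lemma sound_speed_ineq :
  let w := rho W * enth Gam W in
  let c2 := csnd Gam W ^ 2 in
  pr W ^ 2 * (1 - c2) < (w ^ 2 - rho W ^ 2 - 2 * w * pr W) * c2.
Proof.
  intros w c2. pose proof internal_energy_density_pos. destruct HW as (Hr & Hp & _).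
  unfold c2. rewrite csnd_sq. fold w.
  assert (Hw : w = rho W + Gam * (rho W * eint Gam W)) by apply enthalpy_density.
  rewrite pr_eos. set (x := rho W * eint Gam W) in *. clearbody w x. subst w.
  assert (Hw0 : 0 < rho W + Gam * x) by nra.
  assert (Hid : (((rho W + Gam * x) ^ 2 - rho W ^ 2 - 2 * (rho W + Gam * x) * ((Gam - 1) * x))
     * (Gam * ((Gam - 1) * x) / (rho W + Gam * x)))
     - ((Gam - 1) * x) ^ 2 * (1 - Gam * ((Gam - 1) * x) / (rho W + Gam * x))
     = (Gam - 1) * x ^ 2 * ((Gam + 1) * rho W + Gam * (2 - Gam) * x) / (rho W + Gam * x))
    by (field; lra).
  assert (0 < (Gam - 1) * x ^ 2 * ((Gam + 1) * rho W + Gam * (2 - Gam) * x)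
              / (rho W + Gam * x)).
  { assert (0 <= Gam * (2 - Gam) * x) by (apply Rmult_le_pos; nra).
    apply Rdiv_lt_0_compat; [|lra].
    repeat apply Rmult_lt_0_compat; nra. }
  lra.
Qed.

Lemma lorentz_pos : 0 < lorentz W.
Proof.
  destruct HW as (_ & _ & Hu). unfold lorentz, usq.
  apply Rinv_0_lt_compat, sqrt_lt_R0. lra.
Qed.

Lemma lorentz_sq : lorentz W ^ 2 * (1 - usq W) = 1.
Proof.
  destruct HW as (_ & _ & Hu). unfold lorentz, usq.
  rewrite pow_inv, pow2_sqrt by lra. field. lra.
Qed.

Lemma lam_gen_root sg l :
  (sg = 1 \/ sg = -1) ->
  let L := lam_gen sg Gam l W in
  0 < sg * (L - uc l W) /\
  (1 - csnd Gam W ^ 2) * (L - uc l W) ^ 2 = csnd Gam W ^ 2 * (1 - L ^ 2) * (1 - usq W).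
Proof.
  intros Hsg L.
  assert (Hinv : / lorentz W = sqrt (1 - usq W)) by apply Rinv_inv.
  unfold L, lam_gen. rewrite Hinv.
  apply char_speed_root; [exact Hsg | apply csnd_bounds |].
  destruct HW as (_ & _ & Hu). rewrite (usq_split l). split; [nra|].
  rewrite <- (usq_split l). unfold usq. lra.
Qed.

End IdealGas.

Definition wave Gam l (W : prim) s (k : nat) : R := s * cons Gam W k - flux Gam l W k.

Lemma wave_components Gam l W s :
  (l = 1%nat \/ l = 2%nat) ->
  let H := rho W * enth Gam W * lorentz W ^ 2 in
  wave Gam l W s 0 = rho W * lorentz W * (s - uc l W) /\
  wave Gam l W s 3 = H * (s - uc l W) - pr W * s /\
  wave Gam l W s 1 ^ 2 + wave Gam l W s 2 ^ 2
    = (H * uc l W * (s - uc l W) - pr W) ^ 2 + (H * utr l W * (s - uc l W)) ^ 2.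
Proof.
  intros [-> | ->] H; unfold wave, flux, cons, uc, utr, H; simpl; repeat split; ring.
Qed.

(* The case sg = -1 is the case sg = 1 for the mirrored data u_l -> -u_l, s -> -s. *)
Lemma signed_wave_admissible Gam l W sg s :
  1 < Gam <= 2 -> prim_adm W -> (l = 1%nat \/ l = 2%nat) -> (sg = 1 \/ sg = -1) ->
  0 <= sg * (s - lam_gen sg Gam l W) ->
  admissible (fun k => sg * wave Gam l W s k).
Proof.
  intros HG HW Hl Hsg Hs.
  destruct (wave_components Gam l W s Hl) as (H0 & H3 & H12).
  destruct (lam_gen_root Gam W HG HW sg l Hsg) as (Hgt & Hroot).
  pose proof (lorentz_sq W HW) as Hg2. rewrite (usq_split l W) in Hg2, Hroot.
  pose proof HW as (Hr & Hp & _).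
  assert (Hsq : forall x, (sg * x) ^ 2 = x ^ 2) by (intro x; destruct Hsg as [-> | ->]; ring).
  set (L := lam_gen sg Gam l W) in *.
  set (u := uc l W) in *. set (v := utr l W) in *.
  set (H := rho W * enth Gam W * lorentz W ^ 2) in *.
  assert (E12 : (sg * wave Gam l W s 1) ^ 2 + (sg * wave Gam l W s 2) ^ 2
                = (H * (sg * u) * (sg * s - sg * u) - pr W) ^ 2
                  + (H * v * (sg * s - sg * u)) ^ 2).
  { rewrite !Hsq, H12. destruct Hsg as [-> | ->]; ring. }
  unfold admissible; cbv beta. rewrite E12.
  replace (sg * wave Gam l W s 0) with (rho W * lorentz W * (sg * s - sg * u))
    by (rewrite H0; ring).
  replace (sg * wave Gam l W s 3) with (H * (sg * s - sg * u) - pr W * (sg * s))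
    by (rewrite H3; ring).
  pose proof (csnd_bounds Gam W HG HW).
  apply wave_coordinates_admissible with (c2 := csnd Gam W ^ 2) (L := sg * L).
  - exact Hr.
  - exact Hp.
  - exact (lorentz_pos W HW).
  - rewrite Hsq. lra.
  - exact (two_pr_lt_enthalpy_density Gam W HG HW).
  - nra.
  - exact (sound_speed_ineq Gam W HG HW).
  - lra.
  - replace (sg * L - sg * u) with (sg * (L - u)) by ring. rewrite !Hsq. lra.
  - lra.
Qed.

Definition hll_state Gam (sL sR sD sU : R) (WRU WLU WLD WRD : prim) (k : nat) : R :=
  let den := (sR - sL) * (sU - sD) in
  let U := fun W => cons Gam W k in
  let F := fun W => flux Gam 1 W k in
  let G := fun W => flux Gam 2 W k in
  (sR * sU * U WRU + sL * sD * U WLD - sR * sD * U WRD - sL * sU * U WLU) / den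
  - (sU * (F WRU - F WLU) - sD * (F WRD - F WLD)) / den
  - (sR * (G WRU - G WRD) - sL * (G WLU - G WLD)) / den.

Definition wave_speeds_enclose Gam (sL sR sD sU : R) (W : prim) : Prop :=
  sL <= 2 * lam1 Gam 1 W /\ 2 * lam4 Gam 1 W <= sR /\
  sD <= 2 * lam1 Gam 2 W /\ 2 * lam4 Gam 2 W <= sU.

Lemma hll_state_admissible Gam sL sR sD sU WRU WLU WLD WRD :
  1 < Gam <= 2 -> sL < 0 < sR -> sD < 0 < sU ->
  prim_adm WRU -> prim_adm WLU -> prim_adm WLD -> prim_adm WRD ->
  wave_speeds_enclose Gam sL sR sD sU WRU -> wave_speeds_enclose Gam sL sR sD sU WLU ->
  wave_speeds_enclose Gam sL sR sD sU WLD -> wave_speeds_enclose Gam sL sR sD sU WRD ->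
  admissible (hll_state Gam sL sR sD sU WRU WLU WLD WRD).
Proof.
  intros HG [HL HR] [HD HU] HRU HLU HLD HRD bRU bLU bLD bRD.
  unfold wave_speeds_enclose, lam1, lam4 in *.
  assert (Hden : 0 < (sR - sL) * (sU - sD)) by nra.
  apply admissible_ext with (fun k => / ((sR - sL) * (sU - sD)) *
    (sU * (1 * wave Gam 1 WRU (sR / 2) k) + sR * (1 * wave Gam 2 WRU (sU / 2) k)
     + (sU * (-1 * wave Gam 1 WLU (sL / 2) k) + - sL * (1 * wave Gam 2 WLU (sU / 2) k))
     + (- sD * (-1 * wave Gam 1 WLD (sL / 2) k) + - sL * (-1 * wave Gam 2 WLD (sD / 2) k))
     + (- sD * (1 * wave Gam 1 WRD (sR / 2) k) + sR * (-1 * wave Gam 2 WRD (sD / 2) k)))).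
  { intro k. unfold hll_state, wave. field. lra. }
  apply admissible_scale; [apply Rinv_0_lt_compat; exact Hden|].
  repeat apply admissible_add.
  all: apply admissible_scale; [lra | apply signed_wave_admissible; auto; lra].
Qed.

Lemma min4_le a b c d :
  min4 a b c d <= a /\ min4 a b c d <= b /\ min4 a b c d <= c /\ min4 a b c d <= d.
Proof.
  unfold min4.
  pose proof (Rmin_l (Rmin a b) (Rmin c d)). pose proof (Rmin_r (Rmin a b) (Rmin c d)).
  pose proof (Rmin_l a b). pose proof (Rmin_r a b).
  pose proof (Rmin_l c d). pose proof (Rmin_r c d).
  lra.
Qed.

Lemma max4_ge a b c d :
  a <= max4 a b c d /\ b <= max4 a b c d /\ c <= max4 a b c d /\ d <= max4 a b c d.
Proof.
  unfold max4.
  pose proof (Rmax_l (Rmax a b) (Rmax c d)). pose proof (Rmax_r (Rmax a b) (Rmax c d)).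
  pose proof (Rmax_l a b). pose proof (Rmax_r a b).
  pose proof (Rmax_l c d). pose proof (Rmax_r c d).
  lra.
Qed.

Lemma S_wave_speeds_enclose Gam WRU WLU WLD WRD :
  let enclose := wave_speeds_enclose Gam (S_L Gam WRU WLU WLD WRD) (S_R Gam WRU WLU WLD WRD)
                   (S_D Gam WRU WLU WLD WRD) (S_U Gam WRU WLU WLD WRD) in
  enclose WRU /\ enclose WLU /\ enclose WLD /\ enclose WRD.
Proof.
  unfold wave_speeds_enclose, S_L, S_R, S_D, S_U.
  pose proof (min4_le (lam1 Gam 1 WLD) (lam1 Gam 1 WRD) (lam1 Gam 1 WLU) (lam1 Gam 1 WRU)).
  pose proof (max4_ge (lam4 Gam 1 WLD) (lam4 Gam 1 WRD) (lam4 Gam 1 WLU) (lam4 Gam 1 WRU)).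
  pose proof (min4_le (lam1 Gam 2 WLD) (lam1 Gam 2 WRD) (lam1 Gam 2 WLU) (lam1 Gam 2 WRU)).
  pose proof (max4_ge (lam4 Gam 2 WLD) (lam4 Gam 2 WRD) (lam4 Gam 2 WLU) (lam4 Gam 2 WRU)).
  lra.
Qed.

Theorem theorem1 (Gam : R) (WRU WLU WLD WRD : prim) :
  1 < Gam <= 2 ->
  prim_adm WRU -> prim_adm WLU -> prim_adm WLD -> prim_adm WRD ->
  S_L Gam WRU WLU WLD WRD < 0 < S_R Gam WRU WLU WLD WRD ->
  S_D Gam WRU WLU WLD WRD < 0 < S_U Gam WRU WLU WLD WRD ->
  let Ds := Ustar Gam WRU WLU WLD WRD 0 in
  let m1 := Ustar Gam WRU WLU WLD WRD 1 in
  let m2 := Ustar Gam WRU WLU WLD WRD 2 in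
  let Es := Ustar Gam WRU WLU WLD WRD 3 in
  0 < Ds /\ 0 < Es /\ Es ^ 2 - Ds ^ 2 - (m1 ^ 2 + m2 ^ 2) > 0.
Proof.
  intros HG HRU HLU HLD HRD HLR HDU.
  destruct (S_wave_speeds_enclose Gam WRU WLU WLD WRD) as (bRU & bLU & bLD & bRD).
  exact (hll_state_admissible Gam _ _ _ _ WRU WLU WLD WRD HG HLR HDU HRU HLU HLD HRD
           bRU bLU bLD bRD).
Qed.
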